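(* Let $J$ be a bounded half-line Jacobi matrix with $0<\inf_na_n\le\sup_na_n<\infty$, and let $\mathcal R$ be the set of its right limits. Let $\Xi$ be the set of $x_0\in\mathbb{R}$ such that for every $J^{(r)}\in\mathcal R$ and every nonzero solution $(u_n)_{n\in\mathbb{Z}}$ of $a^{(r)}_nu_{n+1}+b^{(r)}_nu_n+a^{(r)}_{n-1}u_{n-1}=x_0u_n$ one has $\sum_{n=-\infty}^0|u_n|^2=\infty$. Then: (i) for every compact $\tilde K\subset\Xi$, $\sup_{x_0\in\tilde K}p_n(x_0)^2/K_n(x_0,x_0)\to0$ as $n\to\infty$ (the Nevai condition holds uniformly on $\tilde K$); (ii) if $\Xi\supseteq\sigma_{\mathrm{ess}}(J)$, then $\sup_{x_0\in\sigma(J)}p_n(x_0)^2/K_n(x_0,x_0)\to0$ (the Nevai condition holds uniformly on $\sigma(J)$).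
   Context: A half-line Jacobi matrix $J$ with parameters $\{a_n,b_n\}_{n\ge1}$ ($a_n>0$) acts on $\ell^2(\{1,2,\dots\})$ by $J_{nn}=b_n$, $J_{n,n+1}=J_{n+1,n}=a_n$; $\rho$ is its spectral measure for $\delta_1$, $p_n$ ($n\ge0$) its orthonormal polynomials ($p_{-1}=0$, $p_0=1$, $xp_n=a_{n+1}p_{n+1}+b_{n+1}p_n+a_np_{n-1}$), and $K_n(x,y)=\sum_{j=0}^np_j(x)p_j(y)$. A two-sided sequence $\{a^{(r)}_n,b^{(r)}_n\}_{n\in\mathbb{Z}}$ is a right limit of $J$ if there are $m_j\to\infty$ with $a_{m_j+n}\to a^{(r)}_n$ and $b_{m_j+n}\to b^{(r)}_n$ for every $n\in\mathbb{Z}$; $J^{(r)}$ is the corresponding two-sided Jacobi matrix. The Nevai condition at $x_0$ means $K_n(x,x_0)^2\,d\rho(x)/K_n(x_0,x_0)\to\delta_{x_0}$ weakly. *)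

From Stdlib Require Import Reals ZArith Rtopology.
Open Scope R_scope.

(* Convention: a b : nat -> R hold the Jacobi parameters a_n, b_n for n >= 1;
   the values a 0, b 0 are irrelevant (never used). *)

(* Orthonormal polynomials: pp n x = (p_n(x), p_{n-1}(x)), p_{-1} = 0, p_0 = 1,
   p_{n+1} = ((x - b_{n+1}) p_n - a_n p_{n-1}) / a_{n+1}. *)
Fixpoint pp (a b : nat -> R) (n : nat) (x : R) : R * R :=
  match n with
  | O => (1, 0)
  | S m => let '(pm, pm1) := pp a b m x in
           (((x - b (S m)) * pm - a m * pm1) / a (S m), pm)
  end.

Definition opoly (a b : nat -> R) (n : nat) (x : R) : R := fst (pp a b n x).

Definition CD_kernel (a b : nat -> R) (n : nat) (x y : R) : R :=
  sum_f_R0 (fun j => opoly a b j x * opoly a b j y) n.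

(* Extension of a 1-based sequence to Z (junk value 0 for indices <= 0;
   irrelevant for right limits since m_j -> infinity). *)
Definition extZ (a : nat -> R) (k : Z) : R :=
  if (0 <? k)%Z then a (Z.to_nat k) else 0.

Definition right_limit (a b : nat -> R) (ar br : Z -> R) : Prop :=
  exists m : nat -> nat,
    (forall M : nat, exists j0 : nat, forall j, (j0 <= j)%nat -> (M <= m j)%nat) /\
    (forall n : Z, Un_cv (fun j => extZ a (Z.of_nat (m j) + n)%Z) (ar n)) /\
    (forall n : Z, Un_cv (fun j => extZ b (Z.of_nat (m j) + n)%Z) (br n)).

Definition Xi (a b : nat -> R) (x0 : R) : Prop :=
  forall ar br : Z -> R, right_limit a b ar br ->
  forall u : Z -> R,
    (forall n : Z, ar n * u (n + 1)%Z + br n * u n + ar (n - 1)%Z * u (n - 1)%Z = x0 * u n) ->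
    (exists n : Z, u n <> 0) ->
    forall M : R, exists N : nat,
      M < sum_f_R0 (fun k => (u (- Z.of_nat k)%Z) ^ 2) N.

(* ell^2({1,2,...}): vectors are 0-based, u k is the component at site k+1. *)
Definition l2sum (u : nat -> R) (s : R) : Prop := infinite_sum (fun k => (u k) ^ 2) s.
Definition l2 (u : nat -> R) : Prop := exists s, l2sum u s.

(* Action of J on 0-based vectors: (Ju)_k = a_k u_{k-1} + b_{k+1} u_k + a_{k+1} u_{k+1}
   (with the first term absent for k = 0). *)
Definition Jop (a b : nat -> R) (u : nat -> R) (k : nat) : R :=
  b (S k) * u k + a (S k) * u (S k) +
  match k with O => 0 | S k' => a k * u k' end.

(* x is in the resolvent set: J - x is a bijection of ell^2 with bounded inverse. *)
Definition resolvent_set (a b : nat -> R) (x : R) : Prop :=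
  exists C : R, forall v : nat -> R, l2 v ->
    exists u : nat -> R, l2 u /\
      (forall k, Jop a b u k - x * u k = v k) /\
      (forall su sv, l2sum u su -> l2sum v sv -> su <= C * sv) /\
      (forall w : nat -> R, l2 w -> (forall k, Jop a b w k - x * w k = v k) ->
         forall k, w k = u k).

Definition spectrum (a b : nat -> R) (x : R) : Prop := ~ resolvent_set a b x.

Definition eigenvalue (a b : nat -> R) (x : R) : Prop :=
  exists u : nat -> R, l2 u /\ (exists k, u k <> 0) /\ (forall k, Jop a b u k = x * u k).

(* Discrete spectrum: isolated points of the spectrum that are eigenvalues
   (eigenvalues of a Jacobi matrix are automatically simple, hence of
   finite multiplicity). *)
Definition disc_spectrum (a b : nat -> R) (x : R) : Prop :=
  spectrum a b x /\ eigenvalue a b x /\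
  exists eps, 0 < eps /\ forall y, spectrum a b y -> Rabs (y - x) < eps -> y = x.

Definition ess_spectrum (a b : nat -> R) (x : R) : Prop :=
  spectrum a b x /\ ~ disc_spectrum a b x.

Definition uniform_nevai (a b : nat -> R) (S : R -> Prop) : Prop :=
  forall eps, 0 < eps -> exists N : nat, forall n, (N <= n)%nat ->
    forall x, S x -> (opoly a b n x) ^ 2 / CD_kernel a b n x x <= eps.

(* Suppose the Nevai ratio p_n(x)^2 / K_n(x,x) does not tend to 0 uniformly on a
   bounded set S: there are eps > 0, n_j >= j and x_j in S with ratio >= eps.
   The solution (p_{k-1}(x_j))_k of the three-term recursion, recentred at site
   n_j + 1 and divided by sqrt K_{n_j}(x_j,x_j), is a vector U_j on Z solving the
   shifted recursion, with left half of square sum <= 1, with U_j(0)^2 >= eps, and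
   bounded at every site uniformly in j.  A diagonal extraction makes the shifted
   coefficients, the U_j and the x_j converge simultaneously; the limit is a right
   limit of J carrying a nonzero solution at x_lim = lim x_j that is square summable at
   -infinity, so x_lim is not in Xi ([bad_sequence_leaves_Xi]).
   (i) For a compact set, x_lim lies in it, contradicting its inclusion in Xi.
   (ii) The spectrum is bounded and closed (Neumann series for the resolvent).  If x_lim
   is a discrete eigenvalue the x_j eventually equal x_lim, but p_n(x_lim)^2 -> 0 since the
   eigenvector is proportional to (p_n(x_lim)); otherwise x_lim is in sigma_ess(J), inside Xi. *)

From Stdlib Require Import Reals ZArith Rtopology Lra Lia Psatz Classical ClassicalEpsilon.
Open Scope R_scope.

Lemma Un_cv_const (c : R) : Un_cv (fun _ => c) c.
Proof. intros e He. exists 0%nat. intros. unfold Rdist. rewrite Rminus_diag, Rabs_R0. lra. Qed.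

Lemma Un_cv_le_const (u : nat -> R) (l B : R) : Un_cv u l -> (forall n, u n <= B) -> l <= B.
Proof. intros Hu Hb. exact (Rle_cv_lim Hb Hu (Un_cv_const B)). Qed.

Lemma Un_cv_ge_const (u : nat -> R) (l B : R) : Un_cv u l -> (forall n, B <= u n) -> B <= l.
Proof. intros Hu Hb. exact (Rle_cv_lim Hb (Un_cv_const B) Hu). Qed.

Lemma Un_cv_scal (u : nat -> R) (l c : R) : Un_cv u l -> Un_cv (fun n => c * u n) (c * l).
Proof. intros. apply CV_mult; auto. apply Un_cv_const. Qed.

Lemma Un_cv_pow2 (u : nat -> R) (l : R) : Un_cv u l -> Un_cv (fun n => u n ^ 2) (l ^ 2).
Proof. intros Hu. simpl. apply CV_mult; [exact Hu|]. apply CV_mult; [exact Hu|apply Un_cv_const]. Qed.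

Lemma Un_cv_eventually_zero (u : nat -> R) (l : R) (J : nat) :
  Un_cv u l -> (forall j, (J <= j)%nat -> u j = 0) -> l = 0.
Proof.
  intros Hu H0. apply (UL_sequence u); [exact Hu|].
  intros e He. exists J. intros n Hn. unfold Rdist. rewrite H0 by exact Hn.
  rewrite Rminus_0_r, Rabs_R0. exact He.
Qed.

Lemma Un_cv_subseq (g v : nat -> R) (l : R) (i : nat) : Un_cv g l ->
  (forall j, (i <= j)%nat -> exists t, (j <= t)%nat /\ v j = g t) -> Un_cv v l.
Proof.
  intros Hg H e He. destruct (Hg e He) as [N HN]. exists (max i N). intros n Hn.
  destruct (H n) as [t [h1 h2]]; [lia|]. rewrite h2. apply HN. lia.
Qed.

Lemma Un_cv_shift (u : nat -> R) (l : R) : Un_cv u l -> Un_cv (fun n => u (S n)) l.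
Proof.
  intros Hu. apply (Un_cv_subseq u _ l 0); [exact Hu|]. intros j _. exists (S j). split; [lia|reflexivity].
Qed.

Lemma Un_cv_finite_sum (F : nat -> nat -> R) (l : nat -> R) (N : nat) :
  (forall k, Un_cv (fun j => F j k) (l k)) -> Un_cv (fun j => sum_f_R0 (F j) N) (sum_f_R0 l N).
Proof. intros H. induction N; simpl; [apply H|apply CV_plus; auto]. Qed.

Lemma sum_scal (f : nat -> R) (c : R) (N : nat) :
  sum_f_R0 (fun k => c * f k) N = c * sum_f_R0 f N.
Proof. rewrite scal_sum. apply sum_eq. intros; ring. Qed.

Lemma sum_S (f : nat -> R) (N : nat) : sum_f_R0 f (S N) = f 0%nat + sum_f_R0 (fun k => f (S k)) N.
Proof. rewrite decomp_sum by lia. reflexivity. Qed.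

Lemma sum_term_le (f : nat -> R) (N k : nat) :
  (forall k, 0 <= f k) -> (k <= N)%nat -> f k <= sum_f_R0 f N.
Proof.
  intros H Hk. induction N.
  - replace k with 0%nat by lia. simpl. lra.
  - rewrite tech5. destruct (Nat.eq_dec k (S N)) as [->|hne].
    + pose proof (cond_pos_sum f N H). lra.
    + pose proof (H (S N)). assert (k <= N)%nat by lia. specialize (IHN H1). lra.
Qed.

Lemma sum_swap (F : nat -> nat -> R) (M N : nat) :
  sum_f_R0 (fun i => sum_f_R0 (F i) N) M = sum_f_R0 (fun k => sum_f_R0 (fun i => F i k) M) N.
Proof. induction M; simpl; [reflexivity|]. rewrite IHM, <- sum_plus. reflexivity. Qed.

Lemma sum_reversed_le (h : nat -> R) : h 0%nat = 0 -> (forall k, 0 <= h k) ->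
  forall n N, sum_f_R0 (fun k => h (n - k)%nat) N <= sum_f_R0 h n.
Proof.
  intros h0 hp n. induction n; intros N.
  - rewrite (sum_eq _ (fun _ => 0)) by (intros k _; exact h0).
    rewrite sum_cte. simpl. rewrite h0. lra.
  - destruct N.
    + simpl. replace (S n - 0)%nat with (S n) by lia. pose proof (cond_pos_sum h n hp). lra.
    + rewrite sum_S, tech5. replace (S n - 0)%nat with (S n) by lia. specialize (IHn N). simpl in IHn |- *. lra.
Qed.

Lemma sum_cauchy_schwarz (w c : nat -> R) (N : nat) : (forall k, 0 < c k) ->
  (sum_f_R0 w N) ^ 2 <= sum_f_R0 c N * sum_f_R0 (fun k => w k ^ 2 / c k) N.
Proof.
  intros Hc. induction N.
  - simpl. specialize (Hc 0%nat). right. field. lra.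
  - rewrite !tech5. set (A := sum_f_R0 w N) in *. set (S0 := sum_f_R0 c N) in *.
    set (W := sum_f_R0 (fun k => w k ^ 2 / c k) N) in *.
    assert (hS : 0 < S0).
    { unfold S0. clear -Hc. induction N; simpl; [|specialize (Hc (S N))]; auto; lra. }
    pose proof (Hc (S N)) as hc. set (cc := c (S N)) in *. set (ww := w (S N)) in *.
    (* the cross term, by the AM-GM inequality *)
    assert (cross : 2 * A * ww <= S0 * (ww ^ 2 / cc) + cc * (A ^ 2 / S0)).
    { assert (e : S0 * (ww ^ 2 / cc) + cc * (A ^ 2 / S0) - 2 * A * ww
                  = (S0 * ww - cc * A) ^ 2 / (cc * S0)) by (field; lra).
      assert (0 <= (S0 * ww - cc * A) ^ 2 / (cc * S0)).
      { unfold Rdiv. apply Rmult_le_pos; [apply pow2_ge_0|]. apply Rlt_le, Rinv_0_lt_compat. nra. }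
      lra. }
    assert (cc * (A ^ 2 / S0) <= cc * W).
    { apply Rmult_le_compat_l; [lra|]. apply Rmult_le_reg_r with S0; [lra|].
      unfold Rdiv. rewrite Rmult_assoc, Rinv_l, Rmult_1_r by lra. nra. }
    assert (e2 : (S0 + cc) * (W + ww ^ 2 / cc) = S0 * W + S0 * (ww ^ 2 / cc) + cc * W + ww ^ 2)
      by (field; lra).
    rewrite e2. nra.
Qed.

Lemma abs_bounded_series_cv (A : nat -> R) (B : R) :
  (forall N, sum_f_R0 (fun k => Rabs (A k)) N <= B) -> exists l, Un_cv (fun N => sum_f_R0 A N) l.
Proof.
  intros H.
  assert (Hg : { l | Un_cv (fun N => sum_f_R0 (fun k => Rabs (A k)) N) l }).
  { apply growing_cv.
    - intro n. simpl. pose proof (Rabs_pos (A (S n))). lra.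
    - exists B. intros x [i ->]. apply H. }
  apply cv_cauchy_1, cauchy_abs, cv_cauchy_2 in Hg. destruct Hg as [l Hl]. eauto.
Qed.

Lemma geometric_sum_le (q : R) (N : nat) : 0 < q < 1 -> sum_f_R0 (fun k => q ^ k) N <= 1 / (1 - q).
Proof.
  intros hq. rewrite tech3 by lra. unfold Rdiv. apply Rmult_le_compat_r.
  - apply Rlt_le, Rinv_0_lt_compat; lra.
  - pose proof (pow_lt q (S N)). lra.
Qed.

(** Square-summable sequences, handled through their partial square sums *)

Definition nsq (u : nat -> R) (N : nat) : R := sum_f_R0 (fun k => u k ^ 2) N.

Lemma nsq_nonneg (u : nat -> R) (N : nat) : 0 <= nsq u N.
Proof. apply cond_pos_sum. intros; apply pow2_ge_0. Qed.

Lemma nsq_term (u : nat -> R) (N k : nat) : (k <= N)%nat -> u k ^ 2 <= nsq u N.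
Proof. intros. apply (sum_term_le (fun k => u k ^ 2)); auto. intros; apply pow2_ge_0. Qed.

Lemma nsq_scal (u : nat -> R) (c : R) (N : nat) : nsq (fun k => c * u k) N = c ^ 2 * nsq u N.
Proof. unfold nsq. rewrite <- sum_scal. apply sum_eq. intros; ring. Qed.

Lemma nsq_lincomb (u w : nat -> R) (U W al be : R) :
  (forall N, nsq u N <= U) -> (forall N, nsq w N <= W) ->
  forall N, nsq (fun k => al * u k + be * w k) N <= 2 * al ^ 2 * U + 2 * be ^ 2 * W.
Proof.
  intros Hu Hw N. eapply Rle_trans.
  - apply (sum_Rle _ (fun k => 2 * al ^ 2 * u k ^ 2 + 2 * be ^ 2 * w k ^ 2)).
    intros k _. pose proof (pow2_ge_0 (al * u k - be * w k)). nra.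
  - rewrite sum_plus, !sum_scal. specialize (Hu N); specialize (Hw N). unfold nsq in *.
    pose proof (pow2_ge_0 al). pose proof (pow2_ge_0 be). nra.
Qed.

Lemma l2sum_partial_le (u : nat -> R) (s : R) : l2sum u s -> forall N, nsq u N <= s.
Proof. intros H N. apply (sum_incr (fun k => u k ^ 2)); [exact H|]. intros; apply pow2_ge_0. Qed.

Lemma l2_partial_bounded (u : nat -> R) : l2 u -> exists s, l2sum u s /\ forall N, nsq u N <= s.
Proof. intros [s Hs]. exists s. split; [exact Hs|]. apply l2sum_partial_le, Hs. Qed.

Lemma partial_bounded_l2sum (u : nat -> R) (V : R) :
  (forall N, nsq u N <= V) -> exists s, l2sum u s /\ s <= V.
Proof.
  intros H.
  assert (Hg : { l | Un_cv (fun N => nsq u N) l }).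
  { apply growing_cv.
    - intro n. unfold nsq. simpl. pose proof (pow2_ge_0 (u (S n))). lra.
    - exists V. intros x [i ->]. apply H. }
  destruct Hg as [l Hl]. exists l. split; [exact Hl|]. exact (Un_cv_le_const _ _ _ Hl H).
Qed.

Lemma partial_bounded_l2 (u : nat -> R) (V : R) : (forall N, nsq u N <= V) -> l2 u.
Proof. intros H. destruct (partial_bounded_l2sum u V H) as [s [Hs _]]. exists s; exact Hs. Qed.

Lemma l2_scal (u : nat -> R) (c : R) : l2 u -> l2 (fun k => c * u k).
Proof.
  intros Hu. destruct (l2_partial_bounded u Hu) as [s [_ Hs]].
  apply (partial_bounded_l2 _ (c ^ 2 * s)). intro N. rewrite nsq_scal.
  apply Rmult_le_compat_l; [apply pow2_ge_0|apply Hs].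
Qed.

Lemma contracted_l2_zero (d : nat -> R) (s r : R) :
  l2sum d s -> (forall N, nsq d N <= r * s) -> r < 1 -> forall k, d k = 0.
Proof.
  intros Hs Hb Hr k.
  assert (s0 : 0 <= s) by (eapply Rle_trans; [apply (nsq_nonneg d 0)|apply (l2sum_partial_le _ _ Hs)]).
  assert (s <= r * s) by exact (Un_cv_le_const _ _ _ Hs Hb).
  assert (s = 0) by nra.
  pose proof (nsq_term d k k (le_n _)). pose proof (l2sum_partial_le _ _ Hs k).
  pose proof (pow2_ge_0 (d k)). nra.
Qed.

Lemma entry_bound (z t V : R) : 0 < t -> z ^ 2 <= t ^ 2 * V -> Rabs z <= t * ((V + 1) / 2).
Proof.
  intros ht hz. rewrite <- pow2_abs in hz. pose proof (Rabs_pos z).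
  pose proof (pow2_ge_0 (Rabs z - t)). apply Rmult_le_reg_l with (2 * t); nra.
Qed.

(** Neumann series *)

Section Neumann.

Variables (T : (nat -> R) -> (nat -> R)) (q : R).
Hypothesis (hq0 : 0 < q) (hq1 : q < 1).
Hypothesis HT : forall v V, (forall N, nsq v N <= V) -> forall N, nsq (T v) N <= q ^ 2 * V.

Lemma iterate_bound (w : nat -> R) (V : R) : (forall N, nsq w N <= V) ->
  forall k N, nsq (Nat.iter k T w) N <= (q ^ k) ^ 2 * V.
Proof.
  intros Hw k. induction k; intros N.
  - simpl. specialize (Hw N). lra.
  - simpl Nat.iter. eapply Rle_trans; [apply HT, IHk|]. simpl. right; ring.
Qed.

Lemma iterate_l2 (w : nat -> R) (V : R) : (forall N, nsq w N <= V) -> forall k, l2 (Nat.iter k T w).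
Proof. intros Hw k. exact (partial_bounded_l2 _ _ (iterate_bound w V Hw k)). Qed.

Lemma neumann_series (w : nat -> R) (V : R) : (forall N, nsq w N <= V) ->
  exists u, (forall i, Un_cv (fun N => sum_f_R0 (fun k => Nat.iter k T w i) N) (u i)) /\
            (forall M, nsq u M <= V / (1 - q) ^ 2).
Proof.
  intros Hw.
  assert (HV : 0 <= V) by (pose proof (nsq_nonneg w 0); specialize (Hw 0%nat); lra).
  pose proof (iterate_bound w V Hw) as Hit.
  assert (Hentry : forall k i, Rabs (Nat.iter k T w i) <= q ^ k * ((V + 1) / 2)).
  { intros k i. apply entry_bound; [apply pow_lt, hq0|].
    eapply Rle_trans; [apply (nsq_term _ i i); lia|apply Hit]. }
  assert (Hex : forall i, exists l, Un_cv (fun N => sum_f_R0 (fun k => Nat.iter k T w i) N) l).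
  { intro i. apply abs_bounded_series_cv with (B := (V + 1) / 2 * (1 / (1 - q))). intro N.
    eapply Rle_trans; [apply sum_Rle; intros n _; apply (Hentry n i)|].
    rewrite (sum_eq _ (fun k => (V + 1) / 2 * q ^ k)) by (intros; ring).
    rewrite sum_scal. apply Rmult_le_compat_l; [lra|]. apply geometric_sum_le; lra. }
  destruct (choice _ Hex) as [u Hu]. exists u. split; [exact Hu|]. intro M.
  (* bound each partial sum of the series by Cauchy-Schwarz with weights q^k, then pass to the limit *)
  apply (Un_cv_le_const (fun N => sum_f_R0 (fun i => (sum_f_R0 (fun k => Nat.iter k T w i) N) ^ 2) M)).
  { apply Un_cv_finite_sum. intro i. apply Un_cv_pow2, Hu. }
  intro N.
  eapply Rle_trans.
  { apply sum_Rle. intros i _. apply (sum_cauchy_schwarz (fun k => Nat.iter k T w i) (fun k => q ^ k)).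
    intros; apply pow_lt; auto. }
  rewrite sum_scal, sum_swap.
  pose proof (geometric_sum_le q N (conj hq0 hq1)) as Hg.
  assert (Hs : sum_f_R0 (fun k => sum_f_R0 (fun i => Nat.iter k T w i ^ 2 / q ^ k) M) N
               <= V * sum_f_R0 (fun k => q ^ k) N).
  { rewrite <- sum_scal. apply sum_Rle. intros k _.
    rewrite (sum_eq _ (fun i => / q ^ k * Nat.iter k T w i ^ 2)) by (intros; unfold Rdiv; ring).
    rewrite sum_scal. specialize (Hit k M). unfold nsq in Hit.
    assert (0 < q ^ k) by (apply pow_lt; auto).
    apply Rmult_le_reg_l with (q ^ k); [auto|]. rewrite <- Rmult_assoc, Rinv_r, Rmult_1_l by lra. nra. }
  assert (0 <= sum_f_R0 (fun k => q ^ k) N) by (apply cond_pos_sum; intros; apply pow_le; lra).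
  assert (0 <= sum_f_R0 (fun k => sum_f_R0 (fun i => Nat.iter k T w i ^ 2 / q ^ k) M) N).
  { apply cond_pos_sum. intros. apply cond_pos_sum. intros. unfold Rdiv. apply Rmult_le_pos.
    apply pow2_ge_0. apply Rlt_le, Rinv_0_lt_compat, pow_lt; auto. }
  replace (V / (1 - q) ^ 2) with ((1 / (1 - q)) * (V * (1 / (1 - q)))) by (field; lra).
  apply Rmult_le_compat; auto. eapply Rle_trans; [apply Hs|]. apply Rmult_le_compat_l; auto.
Qed.

End Neumann.

(** The Jacobi operator on sequences *)

Lemma Jop_lin (a b u w : nat -> R) (al be : R) (j : nat) :
  Jop a b (fun k => al * u k + be * w k) j = al * Jop a b u j + be * Jop a b w j.
Proof. unfold Jop; destruct j; ring. Qed.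

Lemma Jop_scal (a b u : nat -> R) (c : R) (j : nat) : Jop a b (fun k => c * u k) j = c * Jop a b u j.
Proof. unfold Jop; destruct j; ring. Qed.

Lemma Jop_sum (a b : nat -> R) (F : nat -> nat -> R) (N j : nat) :
  Jop a b (fun i => sum_f_R0 (fun k => F k i) N) j = sum_f_R0 (fun k => Jop a b (F k) j) N.
Proof. induction N; [reflexivity|]. rewrite tech5, <- IHN. unfold Jop; destruct j; simpl; ring. Qed.

(* J is continuous for entrywise convergence (it is a band matrix). *)
Lemma Jop_cv (a b : nat -> R) (P : nat -> nat -> R) (u : nat -> R) (j : nat) :
  (forall i, Un_cv (fun N => P N i) (u i)) -> Un_cv (fun N => Jop a b (P N) j) (Jop a b u j).
Proof.
  intros H. unfold Jop; destruct j; apply CV_plus; try (apply CV_plus; apply Un_cv_scal, H).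
  - apply Un_cv_const.
  - apply Un_cv_scal, H.
Qed.

Lemma sq_sum3_le (p q r : R) : (p + q + r) ^ 2 <= 3 * (p ^ 2 + q ^ 2 + r ^ 2).
Proof. pose proof (pow2_ge_0 (p - q)). pose proof (pow2_ge_0 (p - r)). pose proof (pow2_ge_0 (q - r)). nra. Qed.

Lemma sq_mul_le (c z M : R) : Rabs c <= M -> (c * z) ^ 2 <= M ^ 2 * z ^ 2.
Proof.
  intros hc. rewrite Rpow_mult_distr. apply Rmult_le_compat_r; [apply pow2_ge_0|].
  rewrite <- (pow2_abs c). pose proof (Rabs_pos c). nra.
Qed.

Lemma resolvent_set_intro (a b : nat -> R) (y C : R) :
  (forall d, l2 d -> (forall k, Jop a b d k - y * d k = 0) -> forall k, d k = 0) ->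
  (forall v sv, l2sum v sv -> exists u, (forall N, nsq u N <= C * sv) /\ forall k, Jop a b u k - y * u k = v k) ->
  resolvent_set a b y.
Proof.
  intros Hker Hsol. exists C. intros v [sv Hsv].
  destruct (Hsol v sv Hsv) as [u [Hub Heq]].
  exists u. split; [|split; [exact Heq|split]].
  - exact (partial_bounded_l2 u _ Hub).
  - intros su sv' Hsu Hsv'. rewrite (uniqueness_sum _ _ _ Hsv' Hsv). exact (Un_cv_le_const _ _ _ Hsu Hub).
  - (* two solutions differ by a kernel vector *)
    intros w Hw Hweq. destruct (l2_partial_bounded w Hw) as [sw [_ Hswb]].
    set (d := fun k => 1 * w k + -1 * u k).
    assert (Hd : l2 d) by exact (partial_bounded_l2 _ _ (nsq_lincomb w u sw (C * sv) 1 (-1) Hswb Hub)).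
    assert (HJd : forall k, Jop a b d k - y * d k = 0).
    { intro k. unfold d. rewrite Jop_lin. specialize (Hweq k). specialize (Heq k). lra. }
    intro k. pose proof (Hker d Hd HJd k) as Z. unfold d in Z. lra.
Qed.

Section JacobiBounded.

Variables (a b : nat -> R) (M : R).
Hypothesis hM : 0 <= M.
Hypothesis Ha : forall n, (1 <= n)%nat -> Rabs (a n) <= M.
Hypothesis Hb : forall n, (1 <= n)%nat -> Rabs (b n) <= M.

Lemma Jop_entry_sq_le (u : nat -> R) (k : nat) :
  Jop a b u k ^ 2 <= 3 * M ^ 2 * (u k ^ 2 + u (S k) ^ 2 + match k with O => 0 | S k' => u k' ^ 2 end).
Proof.
  unfold Jop. eapply Rle_trans; [apply sq_sum3_le|].
  pose proof (sq_mul_le (b (S k)) (u k) M (Hb (S k) ltac:(lia))).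
  pose proof (sq_mul_le (a (S k)) (u (S k)) M (Ha (S k) ltac:(lia))).
  destruct k as [|k].
  - replace (0 ^ 2) with 0 by ring. lra.
  - pose proof (sq_mul_le (a (S k)) (u k) M (Ha (S k) ltac:(lia))). lra.
Qed.

Lemma Jop_norm_bound (u : nat -> R) (V : R) :
  (forall N, nsq u N <= V) -> forall N, nsq (Jop a b u) N <= 9 * M ^ 2 * V.
Proof.
  intros Hu N.
  set (g := fun k => match k with O => 0 | S k' => u k' ^ 2 end).
  eapply Rle_trans; [apply (sum_Rle _ (fun k => 3 * M ^ 2 * (u k ^ 2 + u (S k) ^ 2 + g k)));
                     intros k _; apply Jop_entry_sq_le|].
  rewrite sum_scal, !sum_plus.
  assert (h1 : sum_f_R0 (fun k => u (S k) ^ 2) N <= V).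
  { pose proof (Hu (S N)) as h. unfold nsq in h. rewrite sum_S in h. pose proof (pow2_ge_0 (u 0%nat)). lra. }
  assert (h2 : sum_f_R0 g N <= V).
  { destruct N as [|N].
    - simpl. pose proof (nsq_nonneg u 0). specialize (Hu 0%nat). lra.
    - rewrite sum_S. simpl (g 0%nat). rewrite Rplus_0_l. apply Hu. }
  pose proof (Hu N). unfold nsq in *. pose proof (pow2_ge_0 M). nra.
Qed.

Lemma l2_eigenvector_zero_large (x : R) (d : nat -> R) : 9 * M ^ 2 < x ^ 2 -> l2 d ->
  (forall k, Jop a b d k = x * d k) -> forall k, d k = 0.
Proof.
  intros hx [sd Hsd] HJd.
  assert (Hdb : forall N, nsq d N <= (9 * M ^ 2 / x ^ 2) * sd).
  { intro N. pose proof (Jop_norm_bound d sd (l2sum_partial_le _ _ Hsd) N) as h.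
    unfold nsq in h. rewrite (sum_eq _ (fun k => x ^ 2 * d k ^ 2)) in h by (intros k _; rewrite HJd; ring).
    rewrite sum_scal in h. fold (nsq d N) in h.
    apply Rmult_le_reg_l with (x ^ 2); [nra|].
    replace (x ^ 2 * (9 * M ^ 2 / x ^ 2 * sd)) with (9 * M ^ 2 * sd) by (field; nra). exact h. }
  apply (contracted_l2_zero d sd _ Hsd Hdb).
  apply Rmult_lt_reg_r with (x ^ 2); [nra|]. unfold Rdiv. rewrite Rmult_assoc, Rinv_l, Rmult_1_r by nra. nra.
Qed.

Lemma Jop_scaled_contraction (x : R) : 36 * M ^ 2 <= x ^ 2 -> x <> 0 ->
  forall v V, (forall N, nsq v N <= V) -> forall N, nsq (fun k => / x * Jop a b v k) N <= (1 / 2) ^ 2 * V.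
Proof.
  intros hx2 hx0 v V Hv N. rewrite nsq_scal.
  pose proof (Jop_norm_bound v V Hv N).
  assert (V0 : 0 <= V) by (pose proof (nsq_nonneg v 0); specialize (Hv 0%nat); lra).
  assert (0 < x ^ 2) by (pose proof (pow2_ge_0 x); pose proof (pow_nonzero x 2 hx0); lra).
  replace ((/ x) ^ 2) with (/ x ^ 2) by (field; exact hx0).
  apply Rmult_le_reg_l with (x ^ 2); [lra|]. rewrite <- Rmult_assoc, Rinv_r, Rmult_1_l by lra. nra.
Qed.

(* Points far from the origin are in the resolvent set: for |x| > 6M+1,
   (J - x)^{-1} v = -x^{-1} sum_k (J/x)^k v. *)
Lemma resolvent_outside_ball (x : R) : 6 * M + 1 < Rabs x -> resolvent_set a b x.
Proof.
  intros Hx.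
  assert (hx2 : 36 * M ^ 2 + 1 <= x ^ 2) by (rewrite <- (pow2_abs x); pose proof (Rabs_pos x); nra).
  assert (hx0 : x <> 0) by (intro h; subst x; pose proof (pow2_ge_0 M); simpl in hx2; lra).
  set (T := fun z : nat -> R => fun k => / x * Jop a b z k).
  pose proof (Jop_scaled_contraction x ltac:(lra) hx0) as HT.
  apply (resolvent_set_intro a b x 4).
  { intros d Hd Hker. apply (l2_eigenvector_zero_large x d); [nra|exact Hd|].
    intro k. specialize (Hker k). lra. }
  intros v sv Hsv.
  destruct (neumann_series T (1 / 2) ltac:(lra) ltac:(lra) HT v sv (l2sum_partial_le _ _ Hsv)) as [u0 [Hu0 Hu0b]].
  (* J u0 = x (u0 - v), read off the telescoping Neumann partial sums *)
  assert (HJu0 : forall i, Jop a b u0 i = x * (u0 i - v i)).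
  { intro i.
    apply (UL_sequence (fun N => Jop a b (fun j => sum_f_R0 (fun k => Nat.iter k T v j) N) i)).
    - apply Jop_cv, Hu0.
    - apply (Un_cv_subseq (fun N => x * (sum_f_R0 (fun k => Nat.iter k T v i) N - v i)) _ _ 0).
      + apply Un_cv_scal, CV_minus; [apply Hu0|apply Un_cv_const].
      + intros j _. exists (S j). split; [lia|].
        rewrite Jop_sum, sum_S. simpl Nat.iter at 1. rewrite Rplus_comm. unfold Rminus.
        rewrite Rplus_assoc, Rplus_opp_r, Rplus_0_r, <- sum_scal. apply sum_eq. intros k _.
        simpl. unfold T. rewrite <- Rmult_assoc, Rinv_r, Rmult_1_l by exact hx0. reflexivity. }
  exists (fun i => - / x * u0 i). split.
  - intro N. rewrite nsq_scal. specialize (Hu0b N).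
    replace (sv / (1 - 1 / 2) ^ 2) with (4 * sv) in Hu0b by field.
    replace ((- / x) ^ 2) with (/ x ^ 2) by (field; exact hx0).
    pose proof (nsq_nonneg u0 N).
    apply Rmult_le_reg_l with (x ^ 2); [nra|]. rewrite <- Rmult_assoc, Rinv_r, Rmult_1_l by nra. nra.
  - intro i. rewrite Jop_scal, HJu0. field. exact hx0.
Qed.

End JacobiBounded.

Lemma resolvent_map (a b : nat -> R) (x : R) : resolvent_set a b x ->
  exists (C : R) (Rs : (nat -> R) -> (nat -> R)), 1 <= C /\
    forall v V, (forall N, nsq v N <= V) ->
      (forall N, nsq (Rs v) N <= C * V) /\
      (forall k, Jop a b (Rs v) k - x * Rs v k = v k) /\
      (forall w, l2 w -> (forall k, Jop a b w k - x * w k = v k) -> forall k, w k = Rs v k).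
Proof.
  intros [C HC].
  assert (Hex : forall v, exists u, l2 v -> l2 u /\ (forall k, Jop a b u k - x * u k = v k) /\
     (forall su sv, l2sum u su -> l2sum v sv -> su <= C * sv) /\
     (forall w, l2 w -> (forall k, Jop a b w k - x * w k = v k) -> forall k, w k = u k)).
  { intro v. destruct (classic (l2 v)) as [Hv|Hv].
    - destruct (HC v Hv) as [u Hu]. exists u. intros _. exact Hu.
    - exists v. intro; contradiction. }
  destruct (choice _ Hex) as [Rs HRs].
  exists (Rmax C 1), Rs. split; [apply Rmax_r|]. intros v V Hv.
  destruct (partial_bounded_l2sum v V Hv) as [sv [Hsv HsvV]].
  destruct (HRs v (ex_intro _ sv Hsv)) as [[su Hsu] [Heq [Hnorm Huniq]]].
  split; [|split; [exact Heq|exact Huniq]].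
  intro N. eapply Rle_trans; [apply (l2sum_partial_le _ _ Hsu)|].
  eapply Rle_trans; [apply (Hnorm su sv Hsu Hsv)|].
  assert (0 <= sv) by (eapply Rle_trans; [apply (nsq_nonneg v 0)|apply (l2sum_partial_le _ _ Hsv)]).
  pose proof (Rmax_l C 1). pose proof (Rmax_r C 1). nra.
Qed.

Section ResolventPerturbation.

Variables (a b : nat -> R) (x C e : R) (Rs : (nat -> R) -> (nat -> R)).
Hypothesis HRs : forall v V, (forall N, nsq v N <= V) ->
  (forall N, nsq (Rs v) N <= C * V) /\
  (forall k, Jop a b (Rs v) k - x * Rs v k = v k) /\
  (forall w, l2 w -> (forall k, Jop a b w k - x * w k = v k) -> forall k, w k = Rs v k).
Hypothesis he : e ^ 2 * C <= 1 / 4.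

(* (J - x - e)^{-1} = sum_k T^k Rs with T z = Rs (e z). *)
Let T := fun z : nat -> R => Rs (fun k => e * z k).

Lemma perturbation_contraction (v : nat -> R) (V : R) :
  (forall N, nsq v N <= V) -> forall N, nsq (T v) N <= (1 / 2) ^ 2 * V.
Proof.
  intros Hv N.
  assert (V0 : 0 <= V) by (pose proof (nsq_nonneg v 0); specialize (Hv 0%nat); lra).
  assert (Hev : forall N, nsq (fun k => e * v k) N <= e ^ 2 * V).
  { intro n. rewrite nsq_scal. apply Rmult_le_compat_l; [apply pow2_ge_0|apply Hv]. }
  destruct (HRs _ _ Hev) as [Hb _]. eapply Rle_trans; [apply Hb|]. nra.
Qed.

Lemma perturbation_step (w : nat -> R) (W : R) : (forall N, nsq w N <= W) -> forall k i,
  Jop a b (Nat.iter (S k) T w) i - x * Nat.iter (S k) T w i = e * Nat.iter k T w i.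
Proof.
  intros Hw k i.
  destruct (l2_partial_bounded _ (l2_scal _ e (iterate_l2 T _ perturbation_contraction w W Hw k))) as [s [_ Hs]].
  exact (proj1 (proj2 (HRs _ _ Hs)) i).
Qed.

(* A square-summable kernel vector d of J - (x + e) satisfies d = T d, hence vanishes. *)
Lemma perturbation_kernel_trivial (d : nat -> R) : l2 d ->
  (forall k, Jop a b d k - (x + e) * d k = 0) -> forall k, d k = 0.
Proof.
  intros [sd Hsd] Hker.
  destruct (l2_partial_bounded _ (l2_scal d e (ex_intro _ sd Hsd))) as [s' [_ Hs']].
  assert (HTd : forall k, d k = T d k).
  { intro k. apply (proj2 (proj2 (HRs _ _ Hs'))); [exists sd; exact Hsd|].
    intro i. specialize (Hker i). lra. }
  assert (Hdb : forall N, nsq d N <= (1 / 2) ^ 2 * sd).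
  { intro N. unfold nsq. rewrite (sum_eq _ (fun k => T d k ^ 2)) by (intros k _; rewrite <- HTd; reflexivity).
    apply perturbation_contraction, (l2sum_partial_le _ _ Hsd). }
  exact (contracted_l2_zero d sd _ Hsd Hdb ltac:(lra)).
Qed.

Lemma perturbation_solution (v : nat -> R) (sv : R) : l2sum v sv ->
  exists u, (forall N, nsq u N <= 4 * C * sv) /\ forall k, Jop a b u k - (x + e) * u k = v k.
Proof.
  intros Hsv. destruct (HRs v sv (l2sum_partial_le _ _ Hsv)) as [Hw0 [Rv_eq _]].
  destruct (neumann_series T (1 / 2) ltac:(lra) ltac:(lra) perturbation_contraction (Rs v) _ Hw0) as [u [Hu Hub]].
  replace (C * sv / (1 - 1 / 2) ^ 2) with (4 * C * sv) in Hub by field.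
  exists u. split; [exact Hub|]. intro i.
  (* pass to the limit in (J - x) (sum_{k <= N+1} T^k Rs v) = v + e sum_{k <= N} T^k Rs v *)
  enough (Hx : Jop a b u i - x * u i = v i + e * u i) by lra.
  apply (UL_sequence (fun N => Jop a b (fun j => sum_f_R0 (fun k => Nat.iter k T (Rs v) j) (S N)) i
                                  - x * sum_f_R0 (fun k => Nat.iter k T (Rs v) i) (S N))).
  - apply CV_minus.
    + apply (Jop_cv a b (fun N j => sum_f_R0 (fun k => Nat.iter k T (Rs v) j) (S N))).
      intro j. apply (Un_cv_shift (fun N => sum_f_R0 (fun k => Nat.iter k T (Rs v) j) N)), Hu.
    + apply Un_cv_scal, (Un_cv_shift (fun N => sum_f_R0 (fun k => Nat.iter k T (Rs v) i) N)), Hu.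
  - apply (Un_cv_subseq (fun N => v i + e * sum_f_R0 (fun k => Nat.iter k T (Rs v) i) N) _ _ 0).
    + apply CV_plus; [apply Un_cv_const|apply Un_cv_scal, Hu].
    + intros j _. exists j. split; [lia|].
      rewrite Jop_sum, <- (sum_scal _ x), <- minus_sum, sum_S. simpl Nat.iter at 1 2.
      rewrite Rv_eq, <- sum_scal. f_equal. apply sum_eq. intros k _. exact (perturbation_step _ _ Hw0 k i).
Qed.

End ResolventPerturbation.

(* The resolvent set is open: near x, J - y is inverted by a Neumann series around R(x). *)
Lemma resolvent_set_open (a b : nat -> R) (x : R) : resolvent_set a b x ->
  exists del, 0 < del /\ forall y, Rabs (y - x) < del -> resolvent_set a b y.
Proof.
  intros Hres. destruct (resolvent_map a b x Hres) as [C [Rs [hC HRs]]].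
  exists (1 / (2 * C)). split; [apply Rdiv_lt_0_compat; lra|].
  intros y Hy.
  assert (he : (y - x) ^ 2 * C <= 1 / 4).
  { rewrite <- (pow2_abs (y - x)). pose proof (Rabs_pos (y - x)).
    assert (Rabs (y - x) * (2 * C) <= 1).
    { apply Rlt_le. apply Rmult_lt_reg_r with (/ (2 * C)); [apply Rinv_0_lt_compat; lra|].
      rewrite Rmult_assoc, Rinv_r, Rmult_1_r by lra. unfold Rdiv in Hy. lra. }
    nra. }
  replace y with (x + (y - x)) by ring.
  apply (resolvent_set_intro a b _ (4 * C)).
  - exact (perturbation_kernel_trivial a b x C (y - x) Rs HRs he).
  - intros v sv Hsv. exact (perturbation_solution a b x C (y - x) Rs HRs he v sv Hsv).
Qed.

(** Orthonormal polynomials *)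

Lemma opoly_S (a b : nat -> R) (n : nat) (x : R) :
  opoly a b (S n) x = ((x - b (S n)) * opoly a b n x - a n * snd (pp a b n x)) / a (S n).
Proof. unfold opoly. simpl. destruct (pp a b n x). reflexivity. Qed.

Lemma snd_pp_S (a b : nat -> R) (n : nat) (x : R) : snd (pp a b (S n) x) = opoly a b n x.
Proof. unfold opoly. simpl. destruct (pp a b n x). reflexivity. Qed.

Lemma opoly_0 (a b : nat -> R) (x : R) : opoly a b 0 x = 1.
Proof. reflexivity. Qed.

(* The formal eigenvector of J at x indexed by sites: site_poly k = p_{k-1}(x),
   with site_poly 0 = p_{-1}(x) = 0. *)
Definition site_poly (a b : nat -> R) (x : R) (k : nat) : R :=
  match k with O => 0 | S k' => opoly a b k' x end.

Lemma site_poly_snd (a b : nat -> R) (x : R) (k : nat) : site_poly a b x k = snd (pp a b k x).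
Proof. destruct k; [reflexivity|]. simpl site_poly. rewrite snd_pp_S. reflexivity. Qed.

Lemma site_poly_rec (a b : nat -> R) (x : R) (k : nat) : a (S k) <> 0 ->
  a (S k) * site_poly a b x (S (S k)) + b (S k) * site_poly a b x (S k) + a k * site_poly a b x k
  = x * site_poly a b x (S k).
Proof. intros h. simpl site_poly at 1 2 4. rewrite opoly_S, site_poly_snd. field. exact h. Qed.

Lemma CD_kernel_diag (a b : nat -> R) (n : nat) (x : R) :
  CD_kernel a b n x x = sum_f_R0 (fun j => opoly a b j x ^ 2) n.
Proof. unfold CD_kernel. apply sum_eq. intros; ring. Qed.

Lemma CD_kernel_site_poly (a b : nat -> R) (x : R) (n : nat) :
  sum_f_R0 (fun i => site_poly a b x i ^ 2) (S n) = CD_kernel a b n x x.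
Proof. rewrite sum_S, CD_kernel_diag. simpl site_poly at 1. replace (0 ^ 2) with 0 by ring. rewrite Rplus_0_l. reflexivity. Qed.

(* K_n(x,x) >= p_0(x)^2 = 1. *)
Lemma CD_kernel_ge1 (a b : nat -> R) (n : nat) (x : R) : 1 <= CD_kernel a b n x x.
Proof.
  rewrite CD_kernel_diag.
  pose proof (sum_term_le (fun j => opoly a b j x ^ 2) n 0 (fun k => pow2_ge_0 _) ltac:(lia)) as h.
  cbv beta in h. rewrite opoly_0 in h. lra.
Qed.

Lemma infinite_sum_terms_cv0 (f : nat -> R) (s : R) : infinite_sum f s -> Un_cv f 0.
Proof.
  intros H e He. destruct (H (e / 2)) as [N HN]; [lra|]. exists (S N). intros n Hn.
  destruct n as [|n]; [lia|]. pose proof (HN n ltac:(lia)). pose proof (HN (S n) ltac:(lia)).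
  unfold Rdist in *. simpl in H1. rewrite Rminus_0_r.
  replace (f (S n)) with ((sum_f_R0 f n + f (S n) - s) - (sum_f_R0 f n - s)) by ring.
  eapply Rle_lt_trans; [apply Rabs_triang|]. rewrite Rabs_Ropp. lra.
Qed.

(* An l2 eigenvector of J is proportional to (p_k(x))_k, so p_n(x)^2 -> 0 at an eigenvalue. *)
Lemma eigenvalue_opoly_cv0 (a b : nat -> R) (x : R) : (forall k, a (S k) <> 0) -> eigenvalue a b x ->
  Un_cv (fun n => opoly a b n x ^ 2) 0.
Proof.
  intros Ha [u [[s Hs] [[k0 Hk0] HJ]]].
  assert (Hu : forall k, u k = u 0%nat * opoly a b k x /\ u (S k) = u 0%nat * opoly a b (S k) x).
  { induction k as [|k [h1 h2]].
    - split; [rewrite opoly_0; ring|].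
      pose proof (HJ 0%nat) as h. unfold Jop in h. rewrite opoly_S. unfold opoly; simpl.
      apply Rmult_eq_reg_l with (a 1%nat); [|apply Ha]. field_simplify; [lra|apply Ha].
    - split; [exact h2|].
      pose proof (HJ (S k)) as h. unfold Jop in h. rewrite opoly_S, snd_pp_S.
      apply Rmult_eq_reg_l with (a (S (S k))); [|apply Ha].
      rewrite h2, h1 in h. field_simplify; [lra|apply Ha]. }
  assert (h0 : u 0%nat <> 0) by (intro h; apply Hk0; rewrite (proj1 (Hu k0)), h; ring).
  apply (Un_cv_subseq (fun n => / u 0%nat ^ 2 * u n ^ 2) _ _ 0).
  - replace 0 with (/ u 0%nat ^ 2 * 0) by ring. apply Un_cv_scal, (infinite_sum_terms_cv0 _ _ Hs).
  - intros j _. exists j. split; [lia|]. rewrite (proj1 (Hu j)). field. exact h0.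
Qed.

(** Extraction of convergent subsequences *)

Definition strictly_increasing (phi : nat -> nat) : Prop := forall j, (phi j < phi (S j))%nat.

Lemma strictly_increasing_lt (phi : nat -> nat) : strictly_increasing phi ->
  forall j k, (j < k)%nat -> (phi j < phi k)%nat.
Proof. intros H j k Hjk. induction Hjk; [apply H|]. specialize (H m). lia. Qed.

Lemma strictly_increasing_ge (phi : nat -> nat) : strictly_increasing phi -> forall j, (j <= phi j)%nat.
Proof. intros H j. induction j; [lia|]. specialize (H j). lia. Qed.

Lemma strictly_increasing_comp (phi psi : nat -> nat) :
  strictly_increasing phi -> strictly_increasing psi -> strictly_increasing (fun j => phi (psi j)).
Proof. intros Hphi Hpsi j. apply strictly_increasing_lt; [exact Hphi|apply Hpsi]. Qed.

Lemma bolzano_weierstrass_subseq (u : nat -> R) (B : R) : (forall j, Rabs (u j) <= B) ->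
  exists phi, strictly_increasing phi /\ exists l, Un_cv (fun j => u (phi j)) l.
Proof.
  intros HB.
  destruct (Bolzano_Weierstrass u (fun c => -B <= c <= B) (compact_P3 (-B) B)) as [l Hl].
  { intro n. specialize (HB n). pose proof (Rle_abs (u n)). pose proof (Rle_abs (- u n)). rewrite Rabs_Ropp in *. lra. }
  assert (Hch : forall N j : nat, exists p, (N <= p)%nat /\ Rabs (u p - l) < / INR (S j)).
  { intros N j. assert (hp : 0 < / INR (S j)) by (apply Rinv_0_lt_compat, lt_0_INR; lia).
    destruct (Hl (disc l (mkposreal _ hp)) N) as [p [h1 h2]].
    - exists (mkposreal _ hp). intros y hy. exact hy.
    - exists p. split; auto. }
  destruct (choice (fun Nj : nat * nat => fun p => (fst Nj <= p)%nat /\ Rabs (u p - l) < / INR (S (snd Nj))))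
    as [ch Hc]; [intros [N j]; exact (Hch N j)|].
  set (phi := fix f (j : nat) : nat := match j with O => ch (0, 0)%nat | S j' => ch (S (f j'), j) end).
  exists phi. split.
  - intro j. simpl. destruct (Hc (S (phi j), S j)) as [h _]. exact h.
  - exists l. intros e He. destruct (archimed_cor1 e He) as [N [hN hN0]].
    exists N. intros n Hn. unfold Rdist.
    assert (Hb : Rabs (u (phi n) - l) < / INR (S n)) by (destruct n; exact (proj2 (Hc (_, _)))).
    eapply Rlt_le_trans; [apply Hb|]. apply Rle_trans with (/ INR N); [|lra].
    apply Rinv_le_contravar; [apply lt_0_INR; lia|]. apply le_INR. lia.
Qed.

Lemma diagonal_extraction (f : nat -> nat -> R) : (forall i, exists B, forall j, Rabs (f i j) <= B) ->
  exists d, strictly_increasing d /\ forall i, exists l, Un_cv (fun j => f i (d j)) l.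
Proof.
  intros Hf.
  assert (HE0 : forall u : nat -> R, exists phi, strictly_increasing phi /\
     ((exists B, forall j, Rabs (u j) <= B) -> exists l, Un_cv (fun j => u (phi j)) l)).
  { intro u. destruct (classic (exists B, forall j, Rabs (u j) <= B)) as [[B HB]|HnB].
    - destruct (bolzano_weierstrass_subseq u B HB) as [phi [Hphi Hl]]. exists phi. split; auto.
    - exists S. split; [intro; lia|]. intro; contradiction. }
  destruct (choice _ HE0) as [E HE].
  (* psi i is the i-th nested extraction: f 0, ..., f i all converge along it *)
  set (psi := fix p (i : nat) : nat -> nat := match i with
     | O => E (f 0%nat)
     | S i' => fun j => p i' (E (fun t => f i (p i' t)) j) end).
  assert (Hinc : forall i, strictly_increasing (psi i)).
  { induction i; simpl; [apply HE|]. fold psi. apply strictly_increasing_comp; [exact IHi|apply HE]. }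
  assert (Hconv : forall i, exists l, Un_cv (fun j => f i (psi i j)) l).
  { destruct i as [|i]; simpl; fold psi.
    - apply HE, Hf.
    - apply (proj2 (HE (fun t => f (S i) (psi i t)))).
      destruct (Hf (S i)) as [B HB]. exists B. intro j. apply HB. }
  assert (Hsub : forall i k j, exists t, (j <= t)%nat /\ psi (i + k)%nat j = psi i t).
  { intros i k. induction k as [|k IHk]; intro j.
    - exists j. rewrite Nat.add_0_r. split; auto.
    - rewrite Nat.add_succ_r. simpl. fold psi.
      set (Ek := E (fun t => f (S (i + k)) (psi (i + k)%nat t))).
      destruct (IHk (Ek j)) as [t [h1 h2]]. exists t. split; [|exact h2].
      pose proof (strictly_increasing_ge Ek (proj1 (HE _)) j). lia. }
  exists (fun j => psi j j). split.
  - intro j. simpl. fold psi. apply strictly_increasing_lt; [apply Hinc|].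
    pose proof (strictly_increasing_ge _ (proj1 (HE (fun t => f (S j) (psi j t)))) (S j)). lia.
  - intro i. destruct (Hconv i) as [l Hl]. exists l.
    apply (Un_cv_subseq _ _ _ i Hl). intros j Hj.
    destruct (Hsub i (j - i)%nat j) as [t [h1 h2]]. exists t. split; auto.
    replace (i + (j - i))%nat with j in h2 by lia. rewrite h2. reflexivity.
Qed.

Lemma diagonal_extraction_enum (I : Type) (enum : nat -> I) (f : I -> nat -> R) :
  (forall i, exists k, enum k = i) -> (forall i, exists B, forall j, Rabs (f i j) <= B) ->
  exists d, strictly_increasing d /\ forall i, exists l, Un_cv (fun j => f i (d j)) l.
Proof.
  intros Henum Hf. destruct (diagonal_extraction (fun k => f (enum k)) (fun k => Hf (enum k))) as [d [Hd Hl]].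
  exists d. split; [exact Hd|]. intro i. destruct (Henum i) as [k <-]. apply Hl.
Qed.

Definition Z_of_code (k : nat) : Z :=
  if Nat.odd k then (- Z.of_nat (S (Nat.div2 k)))%Z else Z.of_nat (Nat.div2 k).

Lemma Z_of_code_surj (z : Z) : exists k, Z_of_code k = z.
Proof.
  unfold Z_of_code. destruct (Z.leb_spec 0 z).
  - exists (2 * Z.to_nat z)%nat. rewrite Nat.odd_mul, Nat.div2_double. simpl. lia.
  - exists (S (2 * (Z.to_nat (- z) - 1)))%nat.
    rewrite Nat.odd_succ, Nat.even_mul, Nat.div2_succ_double. simpl. lia.
Qed.

Definition tag_of_code (i : nat) : bool * bool * Z :=
  (Nat.odd i, Nat.odd (Nat.div2 i), Z_of_code (Nat.div2 (Nat.div2 i))).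

Lemma odd_div2_code (b : bool) (n : nat) : Nat.odd (Nat.b2n b + 2 * n) = b /\ Nat.div2 (Nat.b2n b + 2 * n) = n.
Proof.
  destruct b; simpl Nat.b2n.
  - replace (1 + 2 * n)%nat with (S (2 * n)) by lia.
    rewrite Nat.odd_succ, Nat.even_mul, Nat.div2_succ_double. auto.
  - replace (0 + 2 * n)%nat with (2 * n)%nat by lia. rewrite Nat.odd_mul, Nat.div2_double. auto.
Qed.

Lemma tag_of_code_surj (t : bool * bool * Z) : exists i, tag_of_code i = t.
Proof.
  destruct t as [[b1 b2] z]. destruct (Z_of_code_surj z) as [k Hk].
  exists (Nat.b2n b1 + 2 * (Nat.b2n b2 + 2 * k))%nat. unfold tag_of_code.
  destruct (odd_div2_code b1 (Nat.b2n b2 + 2 * k)) as [-> ->].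
  destruct (odd_div2_code b2 k) as [-> ->]. rewrite Hk. reflexivity.
Qed.

(** Recentred, normalised polynomial solutions and their limits *)

Lemma extZ_pos (a : nat -> R) (N : Z) : (0 < N)%Z -> extZ a N = a (Z.to_nat N).
Proof. intros h. unfold extZ. destruct (Z.ltb_spec 0 N); [reflexivity|lia]. Qed.

Lemma extZ_bound (a : nat -> R) (A : R) : 0 <= A -> (forall n, (1 <= n)%nat -> Rabs (a n) <= A) ->
  forall N, Rabs (extZ a N) <= A.
Proof. intros h0 h N. unfold extZ. destruct (Z.ltb_spec 0 N); [apply h; lia|rewrite Rabs_R0; exact h0]. Qed.

Lemma site_poly_rec_Z (a b : nat -> R) (x : R) (N : Z) : (1 <= N)%Z -> a (Z.to_nat N) <> 0 ->
  extZ a N * site_poly a b x (Z.to_nat (N + 1)) + extZ b N * site_poly a b x (Z.to_nat N)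
  + extZ a (N - 1) * site_poly a b x (Z.to_nat (N - 1)) = x * site_poly a b x (Z.to_nat N).
Proof.
  intros h1 h2. destruct (Z.to_nat N) as [|k] eqn:Ek; [lia|].
  replace N with (Z.of_nat (S k)) in * by lia.
  replace (Z.of_nat (S k) + 1)%Z with (Z.of_nat (S (S k))) by lia.
  replace (Z.of_nat (S k) - 1)%Z with (Z.of_nat k) by lia.
  rewrite !Nat2Z.id, !extZ_pos, !Nat2Z.id by lia.
  rewrite <- (site_poly_rec a b x k h2).
  destruct k as [|k]; [simpl; ring|]. rewrite extZ_pos, Nat2Z.id by lia. reflexivity.
Qed.

(* U_{n,x}(z) = p_{n+z}(x) / sqrt K_n(x,x): the polynomial solution viewed from
   site n+1, normalised so that its part left of the origin has square sum <= 1. *)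
Definition centred_solution (a b : nat -> R) (n : nat) (x : R) (z : Z) : R :=
  site_poly a b x (Z.to_nat (Z.of_nat (S n) + z)) / sqrt (CD_kernel a b n x x).

Section CentredSolution.

Variables (a b : nat -> R) (n : nat) (x : R).

Let U := centred_solution a b n x.

Lemma centred_solution_sq (z : Z) :
  U z ^ 2 = site_poly a b x (Z.to_nat (Z.of_nat (S n) + z)) ^ 2 / CD_kernel a b n x x.
Proof.
  pose proof (CD_kernel_ge1 a b n x). unfold U, centred_solution.
  rewrite <- (sqrt_sqrt (CD_kernel a b n x x)) at 2 by lra.
  assert (0 < sqrt (CD_kernel a b n x x)) by (apply sqrt_lt_R0; lra).
  field. lra.
Qed.

Lemma centred_solution_origin : U 0%Z ^ 2 = opoly a b n x ^ 2 / CD_kernel a b n x x.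
Proof. rewrite centred_solution_sq, Z.add_0_r, Nat2Z.id. reflexivity. Qed.

(* The left part (sites n+1, n, ..., 0) carries at most the normalised mass K_n / K_n = 1. *)
Lemma centred_solution_left_tail (N : nat) : sum_f_R0 (fun k => U (- Z.of_nat k)%Z ^ 2) N <= 1.
Proof.
  pose proof (CD_kernel_ge1 a b n x) as hK.
  rewrite (sum_eq _ (fun k => / CD_kernel a b n x x * site_poly a b x (S n - k) ^ 2)).
  2:{ intros k _. rewrite centred_solution_sq. replace (Z.to_nat (Z.of_nat (S n) + - Z.of_nat k)) with (S n - k)%nat by lia.
      unfold Rdiv. ring. }
  rewrite sum_scal.
  pose proof (sum_reversed_le (fun i => site_poly a b x i ^ 2) ltac:(simpl; ring) (fun k => pow2_ge_0 _) (S n) N) as h.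
  rewrite CD_kernel_site_poly in h.
  apply Rmult_le_reg_l with (CD_kernel a b n x x); [lra|].
  rewrite <- Rmult_assoc, Rinv_r, Rmult_1_l, Rmult_1_r by lra. exact h.
Qed.

Lemma centred_solution_left_bound (k : nat) : Rabs (U (- Z.of_nat k)%Z) <= 1.
Proof.
  pose proof (centred_solution_left_tail k).
  pose proof (sum_term_le (fun k => U (- Z.of_nat k)%Z ^ 2) k k (fun _ => pow2_ge_0 _) (le_n _)) as h.
  cbv beta in h. rewrite <- pow2_abs in h. pose proof (Rabs_pos (U (- Z.of_nat k)%Z)). nra.
Qed.

Lemma centred_solution_rec (z : Z) : (1 <= Z.of_nat (S n) + z)%Z ->
  a (Z.to_nat (Z.of_nat (S n) + z)) <> 0 ->
  extZ a (Z.of_nat (S n) + z) * U (z + 1)%Z + extZ b (Z.of_nat (S n) + z) * U z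
  + extZ a (Z.of_nat (S n) + (z - 1)) * U (z - 1)%Z = x * U z.
Proof.
  intros hz ha. unfold U, centred_solution.
  set (N := (Z.of_nat (S n) + z)%Z) in *.
  replace (Z.of_nat (S n) + (z + 1))%Z with (N + 1)%Z by (unfold N; lia).
  replace (Z.of_nat (S n) + (z - 1))%Z with (N - 1)%Z by (unfold N; lia).
  pose proof (site_poly_rec_Z a b x N hz ha) as R.
  transitivity ((extZ a N * site_poly a b x (Z.to_nat (N + 1)) + extZ b N * site_poly a b x (Z.to_nat N)
    + extZ a (N - 1) * site_poly a b x (Z.to_nat (N - 1))) / sqrt (CD_kernel a b n x x));
  [unfold Rdiv; ring|]. rewrite R. unfold Rdiv. ring.
Qed.

End CentredSolution.

Lemma recursion_step_bound (al be ga x u1 u0 um c A Bb X B : R) : 0 < c -> c <= al ->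
  Rabs be <= Bb -> Rabs ga <= A -> Rabs x <= X -> Rabs u0 <= B -> Rabs um <= B ->
  al * u1 + be * u0 + ga * um = x * u0 -> Rabs u1 <= (X * B + Bb * B + A * B) / c.
Proof.
  intros hc hal hbe hga hx hu0 hum E.
  assert (E2 : al * u1 = x * u0 - be * u0 - ga * um) by lra.
  assert (hr : Rabs (al * u1) <= X * B + Bb * B + A * B).
  { rewrite E2. unfold Rminus. eapply Rle_trans; [apply Rabs_triang|]. rewrite Rabs_Ropp.
    eapply Rle_trans; [apply Rplus_le_compat_r, Rabs_triang|]. rewrite Rabs_Ropp, !Rabs_mult.
    pose proof (Rabs_pos u0). pose proof (Rabs_pos um).
    apply Rplus_le_compat; [apply Rplus_le_compat|]; apply Rmult_le_compat; auto using Rabs_pos. }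
  rewrite Rabs_mult, (Rabs_pos_eq al) in hr by lra.
  apply Rmult_le_reg_l with c; [exact hc|].
  replace (c * ((X * B + Bb * B + A * B) / c)) with (X * B + Bb * B + A * B) by (field; lra).
  pose proof (Rabs_pos u1). nra.
Qed.

Lemma centred_solution_bounded (a b : nat -> R) (c A Bb X : R) (hc : 0 < c)
  (Hlo : forall n, (1 <= n)%nat -> c <= a n) (Hhi : forall n, (1 <= n)%nat -> a n <= A)
  (Hb : forall n, (1 <= n)%nat -> Rabs (b n) <= Bb) (z : Z) :
  exists B, forall n x, Rabs x <= X -> Rabs (centred_solution a b n x z) <= B.
Proof.
  assert (hA0 : 0 <= A) by (specialize (Hlo 1%nat (le_n _)); specialize (Hhi 1%nat (le_n _)); lra).
  assert (HA : forall k, (1 <= k)%nat -> Rabs (a k) <= A).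
  { intros k hk. specialize (Hlo k hk); specialize (Hhi k hk). rewrite Rabs_pos_eq; lra. }
  assert (hB0 : 0 <= Bb) by (specialize (Hb 1%nat (le_n _)); pose proof (Rabs_pos (b 1%nat)); lra).
  (* induction on the nonnegative sites, carrying bounds at two consecutive sites *)
  assert (Hpos : forall k, exists B, forall n x, Rabs x <= X ->
     Rabs (centred_solution a b n x (Z.of_nat k)) <= B /\
     Rabs (centred_solution a b n x (Z.of_nat k - 1)) <= B).
  { induction k as [|k [B HB]].
    - exists 1. intros n x _. split.
      + apply (centred_solution_left_bound a b n x 0).
      + replace (Z.of_nat 0 - 1)%Z with (- Z.of_nat 1)%Z by lia. apply centred_solution_left_bound.
    - exists (Rmax B ((X * B + Bb * B + A * B) / c)). intros n x hx. destruct (HB n x hx) as [h1 h2].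
      split.
      + eapply Rle_trans; [|apply Rmax_r].
        replace (Z.of_nat (S k)) with (Z.of_nat k + 1)%Z by lia.
        set (z0 := Z.of_nat k).
        assert (ha : a (Z.to_nat (Z.of_nat (S n) + z0)) <> 0) by (specialize (Hlo (Z.to_nat (Z.of_nat (S n) + z0)) ltac:(lia)); lra).
        pose proof (centred_solution_rec a b n x z0 ltac:(unfold z0; lia) ha) as E.
        assert (h0 : c <= extZ a (Z.of_nat (S n) + z0)) by (rewrite extZ_pos by lia; apply Hlo; lia).
        exact (recursion_step_bound _ _ _ _ _ _ _ c A Bb X B hc h0
                 (extZ_bound b Bb hB0 Hb _) (extZ_bound a A hA0 HA _) hx h1 h2 E).
      + replace (Z.of_nat (S k) - 1)%Z with (Z.of_nat k) by lia. eapply Rle_trans; [apply h1|apply Rmax_l]. }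
  destruct (Z.le_gt_cases 0 z).
  - destruct (Hpos (Z.to_nat z)) as [B HB]. exists B. intros n x hx.
    rewrite <- (Z2Nat.id z) by lia. apply (HB n x hx).
  - exists 1. intros n x _. replace z with (- Z.of_nat (Z.to_nat (- z)))%Z by lia. apply centred_solution_left_bound.
Qed.

Lemma limit_of_solutions (A B U : nat -> Z -> R) (X : nat -> R) (ar br u : Z -> R) (xs : R) :
  (forall z, Un_cv (fun j => A j z) (ar z)) -> (forall z, Un_cv (fun j => B j z) (br z)) ->
  (forall z, Un_cv (fun j => U j z) (u z)) -> Un_cv X xs ->
  (forall z, exists J, forall j, (J <= j)%nat ->
     A j z * U j (z + 1)%Z + B j z * U j z + A j (z - 1)%Z * U j (z - 1)%Z = X j * U j z) ->
  forall z, ar z * u (z + 1)%Z + br z * u z + ar (z - 1)%Z * u (z - 1)%Z = xs * u z.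
Proof.
  intros HA HB HU HX Hrec z. destruct (Hrec z) as [J HJ].
  assert (Hc := CV_minus _ _ _ _
    (CV_plus _ _ _ _ (CV_plus _ _ _ _ (CV_mult _ _ _ _ (HA z) (HU (z + 1)%Z)) (CV_mult _ _ _ _ (HB z) (HU z)))
                     (CV_mult _ _ _ _ (HA (z - 1)%Z) (HU (z - 1)%Z)))
    (CV_mult _ _ _ _ HX (HU z))).
  apply (Un_cv_eventually_zero _ _ J) in Hc; [lra|].
  intros j hj. cbv beta. rewrite (HJ j hj). ring.
Qed.

Lemma recentred_limits (a b : nat -> R) (c A Bb : R) (hc : 0 < c)
  (Hlo : forall n, (1 <= n)%nat -> c <= a n) (Hhi : forall n, (1 <= n)%nat -> a n <= A)
  (Hb : forall n, (1 <= n)%nat -> Rabs (b n) <= Bb)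
  (n : nat -> nat) (x : nat -> R) (X : R) (HX : forall j, Rabs (x j) <= X) :
  exists d (ar br u : Z -> R) (xs : R), strictly_increasing d /\
    (forall z, Un_cv (fun j => extZ a (Z.of_nat (S (n (d j))) + z)) (ar z)) /\
    (forall z, Un_cv (fun j => extZ b (Z.of_nat (S (n (d j))) + z)) (br z)) /\
    (forall z, Un_cv (fun j => centred_solution a b (n (d j)) (x (d j)) z) (u z)) /\
    Un_cv (fun j => x (d j)) xs.
Proof.
  assert (hA0 : 0 <= A) by (specialize (Hlo 1%nat (le_n _)); specialize (Hhi 1%nat (le_n _)); lra).
  assert (HA : forall k, (1 <= k)%nat -> Rabs (a k) <= A).
  { intros k hk. specialize (Hlo k hk); specialize (Hhi k hk). rewrite Rabs_pos_eq; lra. }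
  assert (hB0 : 0 <= Bb) by (specialize (Hb 1%nat (le_n _)); pose proof (Rabs_pos (b 1%nat)); lra).
  (* all sequences to be made convergent, tagged by bool * bool * Z *)
  set (fam := fun (t : bool * bool * Z) j => let '(b1, b2, z) := t in
    if b1 then (if b2 then extZ a (Z.of_nat (S (n j)) + z) else extZ b (Z.of_nat (S (n j)) + z))
    else (if b2 then centred_solution a b (n j) (x j) z else x j)).
  assert (Hfam : forall t, exists B, forall j, Rabs (fam t j) <= B).
  { intros [[b1 b2] z]. destruct b1, b2; simpl.
    - exists A. intro; apply extZ_bound; auto.
    - exists Bb. intro; apply extZ_bound; auto.
    - destruct (centred_solution_bounded a b c A Bb X hc Hlo Hhi Hb z) as [B HB].
      exists B. intro j. apply HB, HX.
    - exists X. exact HX. }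
  destruct (diagonal_extraction_enum _ tag_of_code fam tag_of_code_surj Hfam) as [d [Hd Hlim]].
  destruct (choice _ Hlim) as [L HL].
  exists d, (fun z => L (true, true, z)), (fun z => L (true, false, z)), (fun z => L (false, true, z)),
    (L (false, false, 0%Z)).
  repeat split; [exact Hd|intro z; exact (HL (true, true, z))|intro z; exact (HL (true, false, z))
                |intro z; exact (HL (false, true, z))|exact (HL (false, false, 0%Z))].
Qed.

(* Core construction: if along n_j >= j and bounded x_j the Nevai ratio stays >= eps,
   then some subsequence x_{phi j} converges to a point outside Xi: the recentred
   coefficients converge to a right limit, and the centred solutions to a solution at
   the limit point which is nonzero at the origin and has left half of square sum <= 1. *)
Lemma bad_sequence_leaves_Xi (a b : nat -> R) (c A Bb : R) (hc : 0 < c)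
  (Hlo : forall n, (1 <= n)%nat -> c <= a n) (Hhi : forall n, (1 <= n)%nat -> a n <= A)
  (Hb : forall n, (1 <= n)%nat -> Rabs (b n) <= Bb)
  (n : nat -> nat) (hn : forall j, (j <= n j)%nat) (x : nat -> R) (X : R) (HX : forall j, Rabs (x j) <= X)
  (eps : R) (he : 0 < eps)
  (Hr : forall j, eps <= opoly a b (n j) (x j) ^ 2 / CD_kernel a b (n j) (x j) (x j)) :
  exists phi xs, strictly_increasing phi /\ Un_cv (fun j => x (phi j)) xs /\ ~ Xi a b xs.
Proof.
  destruct (recentred_limits a b c A Bb hc Hlo Hhi Hb n x X HX)
    as [d [ar [br [u [xs [Hd [Ha [Hbr [Hu Hx]]]]]]]]].
  exists d, xs. split; [exact Hd|split; [exact Hx|]].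
  intro HXi.
  assert (Hdge : forall j, (j <= n (d j))%nat)
    by (intro j; pose proof (strictly_increasing_ge d Hd j); specialize (hn (d j)); lia).
  assert (HRL : right_limit a b ar br).
  { exists (fun j => S (n (d j))). split; [|split; [exact Ha|exact Hbr]].
    intro M. exists M. intros j hj. specialize (Hdge j). lia. }
  assert (Heq : forall z, ar z * u (z + 1)%Z + br z * u z + ar (z - 1)%Z * u (z - 1)%Z = xs * u z).
  { apply (limit_of_solutions _ _ _ _ ar br u xs Ha Hbr Hu Hx).
    intro z. exists (Z.to_nat (- z)). intros j hj. specialize (Hdge j).
    apply centred_solution_rec; [lia|]. specialize (Hlo (Z.to_nat (Z.of_nat (S (n (d j))) + z)) ltac:(lia)). lra. }
  assert (Hnz : exists z, u z <> 0).
  { exists 0%Z. intro h0.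
    assert (eps <= u 0%Z ^ 2).
    { apply (Un_cv_ge_const _ _ _ (Un_cv_pow2 _ _ (Hu 0%Z))).
      intro j. rewrite centred_solution_origin. apply Hr. }
    rewrite h0 in H. simpl in H. lra. }
  destruct (HXi ar br HRL u Heq Hnz 1) as [N HN].
  assert (sum_f_R0 (fun k => u (- Z.of_nat k)%Z ^ 2) N <= 1).
  { apply (Un_cv_le_const (fun j => sum_f_R0 (fun k => centred_solution a b (n (d j)) (x (d j)) (- Z.of_nat k)%Z ^ 2) N)).
    - apply (Un_cv_finite_sum (fun j k => centred_solution a b (n (d j)) (x (d j)) (- Z.of_nat k)%Z ^ 2)).
      intro k. apply Un_cv_pow2, Hu.
    - intro j. apply centred_solution_left_tail. }
  lra.
Qed.

Lemma not_uniform_nevai_witness (a b : nat -> R) (S : R -> Prop) : ~ uniform_nevai a b S ->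
  exists eps, 0 < eps /\ exists (n : nat -> nat) (x : nat -> R), (forall j, (j <= n j)%nat) /\
    (forall j, S (x j)) /\ forall j, eps <= opoly a b (n j) (x j) ^ 2 / CD_kernel a b (n j) (x j) (x j).
Proof.
  intros H. apply not_all_ex_not in H. destruct H as [eps H].
  apply imply_to_and in H. destruct H as [he H]. exists eps. split; [exact he|].
  assert (Hj : forall j : nat, exists p : nat * R, (j <= fst p)%nat /\ S (snd p) /\
     eps <= opoly a b (fst p) (snd p) ^ 2 / CD_kernel a b (fst p) (snd p) (snd p)).
  { intro j. apply NNPP. intro Hc. apply H. exists j. intros n hn x hx.
    apply Rnot_lt_le. intro hlt. apply Hc. exists (n, x). simpl. repeat split; auto. lra. }
  destruct (choice _ Hj) as [P HP].
  exists (fun j => fst (P j)), (fun j => snd (P j)). repeat split; intro j; apply HP.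
Qed.

Lemma nevai_failure_limit (a b : nat -> R) (c A Bb : R) (hc : 0 < c)
  (Hlo : forall n, (1 <= n)%nat -> c <= a n) (Hhi : forall n, (1 <= n)%nat -> a n <= A)
  (Hb : forall n, (1 <= n)%nat -> Rabs (b n) <= Bb) (S : R -> Prop) (X : R)
  (HS : forall x, S x -> Rabs x <= X) : ~ uniform_nevai a b S ->
  exists eps (n : nat -> nat) (x : nat -> R) phi xs, 0 < eps /\ (forall j, (j <= n j)%nat) /\
    (forall j, S (x j)) /\
    (forall j, eps <= opoly a b (n j) (x j) ^ 2 / CD_kernel a b (n j) (x j) (x j)) /\
    strictly_increasing phi /\ Un_cv (fun j => x (phi j)) xs /\ ~ Xi a b xs.
Proof.
  intros H. destruct (not_uniform_nevai_witness a b S H) as [eps [he [n [x [hn [hS hr]]]]]].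
  destruct (bad_sequence_leaves_Xi a b c A Bb hc Hlo Hhi Hb n hn x X (fun j => HS _ (hS j)) eps he hr)
    as [phi [xs [hphi [hcv hnx]]]].
  exists eps, n, x, phi, xs. repeat split; auto.
Qed.

Lemma spectrum_closed (a b : nat -> R) (y : nat -> R) (ys : R) :
  (forall j, spectrum a b (y j)) -> Un_cv y ys -> spectrum a b ys.
Proof.
  intros Hy Hcv Hres. destruct (resolvent_set_open a b ys Hres) as [del [hdel Hdel]].
  destruct (Hcv del hdel) as [N HN]. apply (Hy N), Hdel, (HN N), le_n.
Qed.

(* At an eigenvalue the Nevai ratio tends to 0, since it is at most p_n(x)^2 (K_n >= 1). *)
Lemma nevai_ratio_cv0_at_eigenvalue (a b : nat -> R) (x : R) : (forall k, a (S k) <> 0) ->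
  eigenvalue a b x -> Un_cv (fun n => opoly a b n x ^ 2 / CD_kernel a b n x x) 0.
Proof.
  intros Ha Heig e He. destruct (eigenvalue_opoly_cv0 a b x Ha Heig e He) as [N HN].
  exists N. intros n hn. specialize (HN n hn). unfold Rdist in *. rewrite Rminus_0_r in *.
  pose proof (CD_kernel_ge1 a b n x). pose proof (pow2_ge_0 (opoly a b n x)).
  assert (0 <= opoly a b n x ^ 2 / CD_kernel a b n x x) by (unfold Rdiv; apply Rmult_le_pos; [lra|apply Rlt_le, Rinv_0_lt_compat; lra]).
  assert (opoly a b n x ^ 2 / CD_kernel a b n x x <= opoly a b n x ^ 2).
  { apply Rmult_le_reg_r with (CD_kernel a b n x x); [lra|]. unfold Rdiv.
    rewrite Rmult_assoc, Rinv_l, Rmult_1_r by lra. nra. }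
  rewrite Rabs_pos_eq in * by lra. lra.
Qed.

Lemma uniform_nevai_compact (a b : nat -> R) (c A Bb : R) (hc : 0 < c)
  (Hlo : forall n, (1 <= n)%nat -> c <= a n) (Hhi : forall n, (1 <= n)%nat -> a n <= A)
  (Hb : forall n, (1 <= n)%nat -> Rabs (b n) <= Bb) (Kt : R -> Prop) :
  compact Kt -> (forall x, Kt x -> Xi a b x) -> uniform_nevai a b Kt.
Proof.
  intros HKt HXi. apply NNPP. intro Hfail.
  destruct (compact_P1 Kt HKt) as [m [m' Hmm']].
  assert (HX : forall x, Kt x -> Rabs x <= Rabs m + Rabs m').
  { intros x hx. destruct (Hmm' x hx). apply Rabs_le.
    pose proof (Rle_abs (- m)). pose proof (Rle_abs m'). pose proof (Rabs_pos m). pose proof (Rabs_pos m'). rewrite Rabs_Ropp in *. lra. }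
  destruct (nevai_failure_limit a b c A Bb hc Hlo Hhi Hb Kt _ HX Hfail)
    as [eps [n [x [phi [xs [_ [_ [hK [_ [_ [hcv hnx]]]]]]]]]]].
  apply hnx, HXi.
  (* Kt is closed, so the limit of the points x_{phi j} of Kt is in Kt *)
  apply NNPP. intro hout. destruct (compact_P2 Kt HKt xs hout) as [del Hdel].
  destruct (hcv del (cond_pos del)) as [N HN]. apply (Hdel (x (phi N))); [apply HN; lia|apply hK].
Qed.

Lemma uniform_nevai_spectrum (a b : nat -> R) (c A Bb : R) (hc : 0 < c)
  (Hlo : forall n, (1 <= n)%nat -> c <= a n) (Hhi : forall n, (1 <= n)%nat -> a n <= A)
  (Hb : forall n, (1 <= n)%nat -> Rabs (b n) <= Bb) :
  (forall x, ess_spectrum a b x -> Xi a b x) -> uniform_nevai a b (spectrum a b).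
Proof.
  intros Hess. apply NNPP. intro Hfail.
  set (M := Rmax A Bb).
  assert (hM : 0 <= M) by (specialize (Hlo 1%nat (le_n _)); specialize (Hhi 1%nat (le_n _));
                           eapply Rle_trans; [|apply Rmax_l]; lra).
  assert (HaM : forall k, (1 <= k)%nat -> Rabs (a k) <= M).
  { intros k hk. specialize (Hlo k hk); specialize (Hhi k hk). rewrite Rabs_pos_eq by lra.
    eapply Rle_trans; [apply Hhi|apply Rmax_l]. }
  assert (HbM : forall k, (1 <= k)%nat -> Rabs (b k) <= M)
    by (intros k hk; eapply Rle_trans; [apply Hb; auto|apply Rmax_r]).
  assert (HX : forall x, spectrum a b x -> Rabs x <= 6 * M + 1).
  { intros x hx. apply Rnot_lt_le. intro hlt. exact (hx (resolvent_outside_ball a b M hM HaM HbM x hlt)). }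
  destruct (nevai_failure_limit a b c A Bb hc Hlo Hhi Hb _ _ HX Hfail)
    as [eps [n [x [phi [xs [he [hn [hsp [hr [hphi [hcv hnx]]]]]]]]]]].
  pose proof (spectrum_closed a b _ xs (fun j => hsp (phi j)) hcv) as Hsp.
  destruct (classic (disc_spectrum a b xs)) as [[_ [Heig [del [hdel Hiso]]]]|Hnd].
  - (* xs isolated: x_{phi j} = xs eventually, but the ratio at an eigenvalue tends to 0 *)
    destruct (hcv del hdel) as [J HJ].
    assert (Ha0 : forall k, a (S k) <> 0) by (intro k; specialize (Hlo (S k) ltac:(lia)); lra).
    destruct (nevai_ratio_cv0_at_eigenvalue a b xs Ha0 Heig eps he) as [N0 HN0].
    set (j := max J N0).
    specialize (hr (phi j)). rewrite (Hiso _ (hsp (phi j)) (HJ j (Nat.le_max_l _ _))) in hr.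
    assert (hnj : (N0 <= n (phi j))%nat)
      by (pose proof (strictly_increasing_ge phi hphi j); specialize (hn (phi j)); unfold j in *; lia).
    specialize (HN0 _ hnj). unfold Rdist in HN0. rewrite Rminus_0_r in HN0.
    pose proof (Rle_abs (opoly a b (n (phi j)) xs ^ 2 / CD_kernel a b (n (phi j)) xs xs)). lra.
  - apply hnx, Hess. split; assumption.
Qed.

Theorem theorem8p1 (a b : nat -> R)
  (ha_inf : exists c, 0 < c /\ forall n, (1 <= n)%nat -> c <= a n)
  (ha_sup : exists C, forall n, (1 <= n)%nat -> a n <= C)
  (hb : exists C, forall n, (1 <= n)%nat -> Rabs (b n) <= C) :
  (forall Kt : R -> Prop, compact Kt -> (forall x, Kt x -> Xi a b x) ->
     uniform_nevai a b Kt) /\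
  ((forall x, ess_spectrum a b x -> Xi a b x) -> uniform_nevai a b (spectrum a b)).
Proof.
  destruct ha_inf as [c [hc Hlo]]. destruct ha_sup as [A Hhi]. destruct hb as [Bb Hb].
  split.
  - exact (uniform_nevai_compact a b c A Bb hc Hlo Hhi Hb).
  - exact (uniform_nevai_spectrum a b c A Bb hc Hlo Hhi Hb).
Qed.
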